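(* Let $H[A,B]$ be a connected bipartite cubic graph, $a\in A$, $b\in B$. Then $(a,b)$ is not $\lambda$-matchable if and only if exactly one of the following holds: (i) there is a unique edge joining $a$ and $b$, and it belongs to some $2$-cut of $H$; or (ii) $a$ and $b$ are nonadjacent and there is a tight cut $\partial(X)$ with $a\in X^-$ and $b\in\overline{X}^-$.
   Context: Graphs are loopless but may have parallel edges. For a connected bipartite cubic graph $H[A,B]$, $a\in A$, $b\in B$, an $(a,b)$-matching is a spanning subgraph in which $a,b$ have degree $3$ and every other vertex degree $1$; $(a,b)$ is $\lambda$-matchable if one exists. A cut $C$ is tight if $|C\cap M|=1$ for every perfect matching $M$. For an odd cut $\partial(X)$ of $H[A,B]$, $X^+$ and $X^-$ are the larger and smaller of $X\cap A$ and $X\cap B$; $\overline{X}^+,\overline{X}^-$ are defined analogously for $\overline{X}=V(H)-X$. A $2$-cut is a cut with exactly two edges. *)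

(* Multigraphs (parallel edges allowed) on finite vertex
   type V and finite edge type E, each edge e having ends src e, tgt e. *)
From mathcomp Require Import all_boot.
Set Implicit Arguments. Unset Strict Implicit. Unset Printing Implicit Defensive.

Section Graphs.
Variables (V E : finType) (src tgt : E -> V).

Definition inc (e : E) (v : V) : bool := (src e == v) || (tgt e == v).

Definition joins (e : E) (u v : V) : bool :=
  ((src e == u) && (tgt e == v)) || ((src e == v) && (tgt e == u)).

(* degree of v in the spanning subgraph with edge set F (loopless graphs) *)
Definition deg (F : {set E}) (v : V) : nat := #|[set e in F | inc e v]|.

Definition loopless : Prop := forall e, src e != tgt e.

Definition adj (u v : V) : bool := [exists e, joins e u v].

Definition connected : Prop := forall u v, connect adj u v.

Definition cubic : Prop := forall v, deg setT v = 3.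

Definition bipartite_on (A : {set V}) : Prop :=
  forall e, (src e \in A) != (tgt e \in A).

Definition perfect_matching (M : {set E}) : Prop := forall v, deg M v = 1.

Definition ab_matching (a b : V) (F : {set E}) : Prop :=
  deg F a = 3 /\ deg F b = 3 /\ forall v, v != a -> v != b -> deg F v = 1.

Definition lambda_matchable (a b : V) : Prop := exists F, ab_matching a b F.

Definition cut (X : {set V}) : {set E} :=
  [set e | (src e \in X) != (tgt e \in X)].

Definition tight (C : {set E}) : Prop :=
  forall M, perfect_matching M -> #|C :&: M| = 1.

(* X^- : the smaller of X ∩ A and X ∩ B (B = ~: A); meaningful for odd X *)
Definition Xminus (A X : {set V}) : {set V} :=
  if #|X :&: A| < #|X :&: ~: A| then X :&: A else X :&: ~: A.

End Graphs.

From mathcomp Require Import all_boot zify.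
Set Implicit Arguments. Unset Strict Implicit. Unset Printing Implicit Defensive.

(* Orient every edge from A to B.  For a vertex set X and a spanning subgraph
   F, counting edge ends on both sides gives the balance
     sum of deg_F over X∩A + #(F-edges entering X)
       = sum of deg_F over X∩B + #(F-edges leaving X).
   For H itself (all degrees 3), for perfect matchings (all degrees 1) and for
   an (a,b)-matching (degree 3 at a) this shows that a 2-cut through the only
   ab-edge, or a tight cut with a in X^- and b outside, leaves no room for an
   (a,b)-matching.  Conversely, if there is none, then either a (or b) has
   parallel edges to some other neighbour, or -- an (a,b)-matching being all
   edges at a and b plus a perfect matching of the remaining vertices -- Hall's
   condition fails for some set S.  In both cases a together with S, its
   neighbours and the other neighbours of a forms a set X whose balance forces
   a 2-cut through the ab-edge or a tight cut.  Hall's theorem also provides the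
   perfect matchings through any given edge that tightness arguments need. *)

Lemma disjoint_setD (T : finType) (X Y : {set T}) : [disjoint X & Y :\: X].
Proof. by rewrite disjoint_sym; have := subxx (Y :\: X); rewrite subsetD => /andP[]. Qed.

Lemma cardsIC (T : finType) (X Y : {set T}) : #|X :&: Y| + #|~: X :&: Y| = #|Y|.
Proof. by rewrite -(cardsID X Y) setDE ![Y :&: _]setIC. Qed.

Lemma card_sum_fibres (T U : finType) (g : T -> U) (P : {set T}) (Y : {set U}) :
  #|[set x in P | g x \in Y]| = \sum_(y in Y) #|[set x in P | g x == y]|.
Proof.
rewrite -sum1_card (partition_big g (mem Y)) => [|x]; last by rewrite inE => /andP[].
apply: eq_bigr => y yY; rewrite sum1dep_card; apply: eq_card => x; rewrite !inE.
by rewrite -andbA; case: (g x =P y) => [->|]; rewrite ?andbF // [y \in Y]yY.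
Qed.

Lemma mem_Xminus_in (T : finType) (A X : {set T}) x : x \in A ->
  (x \in Xminus A X) = (x \in X) && (#|X :&: A| < #|X :&: ~: A|).
Proof. by move=> xA; rewrite /Xminus; case: ifP; rewrite !inE xA ?andbT ?andbF. Qed.

Lemma mem_Xminus_notin (T : finType) (A X : {set T}) x : x \notin A ->
  (x \in Xminus A X) = (x \in X) && (#|X :&: ~: A| <= #|X :&: A|).
Proof. by move=> xB; rewrite /Xminus; case: ltnP; rewrite !inE (negbTE xB) ?andbT ?andbF. Qed.

Section Hall.
Variables (T : finType) (r : rel T).

Definition nbhd (R S : {set T}) : {set T} := [set y in R | [exists x in S, r x y]].

Definition hall_condition (L R : {set T}) : Prop :=
  forall S : {set T}, S \subset L -> #|S| <= #|nbhd R S|.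

Definition saturating (L R : {set T}) (f : T -> T) : Prop :=
  (forall x, x \in L -> (f x \in R) && r x (f x)) /\ {in L &, injective f}.

Lemma saturating_nbhd (L R : {set T}) f : saturating L R f -> saturating L (nbhd R L) f.
Proof.
case=> fLR finj; split=> // x xL; have /andP[fxR rx] := fLR x xL.
by rewrite inE fxR rx andbT; apply/existsP; exists x; rewrite xL.
Qed.

Lemma saturating_glue (S L R1 R2 : {set T}) f1 f2 :
  S \subset L -> [disjoint R1 & R2] ->
  saturating S R1 f1 -> saturating (L :\: S) R2 f2 ->
  saturating L (R1 :|: R2) (fun x => if x \in S then f1 x else f2 x).
Proof.
move=> sSL dR [f1R f1I] [f2R f2I].
have LS x : x \in L -> x \notin S -> x \in L :\: S by rewrite inE => -> ->.
split=> [x xL | x y xL yL /=].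
  case: ifP => xS; first by have /andP[x1 ->] := f1R x xS; rewrite in_setU x1.
  by have /andP[x2 ->] := f2R x (LS x xL (negbT xS)); rewrite in_setU x2 orbT.
case: ifP => xS; case: ifP => yS; first exact: f1I.
- move=> fxy; have /andP[y2 _] := f2R y (LS y yL (negbT yS)).
  by have /andP[+ _] := f1R x xS; rewrite fxy => /(disjointFr dR); rewrite y2.
- move=> fxy; have /andP[x2 _] := f2R x (LS x xL (negbT xS)).
  by have /andP[+ _] := f1R y yS; rewrite -fxy => /(disjointFr dR); rewrite x2.
- by apply: f2I; apply: LS => //; rewrite ?xS ?yS.
Qed.

Lemma hall_condition_sub (L R S : {set T}) : hall_condition L R -> S \subset L ->
  hall_condition S R.
Proof. by move=> hall sSL S' sS'S; apply/hall/subset_trans/sSL. Qed.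

(* A critical set [S0] (one with no surplus) can be matched inside its own
   neighbourhood, and the rest of [L] keeps Hall's condition outside it. *)
Lemma hall_condition_critical (L R S0 : {set T}) : hall_condition L R -> S0 \subset L ->
  #|nbhd R S0| <= #|S0| -> hall_condition (L :\: S0) (R :\: nbhd R S0).
Proof.
move=> hall sS0L crit S sS.
have dS : [disjoint S & S0].
  by apply/pred0P => x /=; apply/negP => /andP[/(subsetP sS)]; rewrite inE => /andP[/negP].
have sNU : nbhd R (S :|: S0) \subset nbhd R S0 :|: nbhd (R :\: nbhd R S0) S.
  apply/subsetP => y; rewrite inE => /andP[yR /existsP[x /andP[xSU rxy]]].
  rewrite in_setU; case: (boolP (y \in nbhd R S0)) => //= yN.
  rewrite inE in_setD yN yR /=; apply/existsP; exists x; rewrite rxy andbT.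
  move: xSU; rewrite in_setU => /orP[// | xS0]; case/negP: yN.
  by rewrite inE yR; apply/existsP; exists x; rewrite xS0.
have := hall (S :|: S0); rewrite subUset (subset_trans sS (subsetDl _ _)) sS0L.
move=> /(_ isT); rewrite cardsU (disjoint_setI0 dS) cards0 subn0.
by have := subset_leq_card sNU; rewrite cardsU; lia.
Qed.

Lemma hall_condition_surplus (L R : {set T}) x0 y0 : x0 \in L ->
  (forall S : {set T}, S \subset L -> S != set0 -> S != L -> #|S| < #|nbhd R S|) ->
  hall_condition (L :\ x0) (R :\ y0).
Proof.
move=> x0L surplus S sS; have [-> | nS] := eqVneq S set0; first by rewrite cards0.
have sSL : S \subset L by apply: subset_trans sS (subsetDl _ _).
have SL : S != L by apply: contraTneq sS => ->; apply/subsetPn; exists x0; rewrite ?inE ?eqxx.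
have sN : nbhd R S \subset y0 |: nbhd (R :\ y0) S.
  apply/subsetP => y; rewrite !inE => /andP[yR ->].
  by case: eqP; rewrite ?yR.
have := surplus S sSL nS SL; have := subset_leq_card sN; rewrite cardsU1; lia.
Qed.

Theorem hall_saturating (L R : {set T}) :
  hall_condition L R -> exists f, saturating L R f.
Proof.
have [n] := ubnP #|L|; elim: n L R => // n IH L R ltLn hall.
case: (boolP [exists S : {set T},
    [&& S \subset L, S != set0, S != L & #|nbhd R S| <= #|S|]]).
- case/existsP=> S0 /and4P[sS0L nS0 S0L crit].
  have [f1 /saturating_nbhd f1S] : exists f, saturating S0 R f.
    apply: IH (hall_condition_sub hall sS0L).
    have /proper_card : S0 \proper L by rewrite properEneq S0L.
    lia.
  have [f2 f2S] : exists f, saturating (L :\: S0) (R :\: nbhd R S0) f.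
    apply: IH (hall_condition_critical hall sS0L crit).
    by have := cardsID S0 L; rewrite (setIidPr sS0L); move: nS0; rewrite -card_gt0; lia.
  have sNR : nbhd R S0 \subset R by apply/subsetP => y; rewrite inE => /andP[].
  exists (fun x => if x \in S0 then f1 x else f2 x).
  rewrite -(setID R (nbhd R S0)) (setIidPr sNR).
  exact: saturating_glue (disjoint_setD _ _) f1S f2S.
- rewrite negb_exists => /forallP noncrit.
  have [-> | [x0 x0L]] := set_0Vmem L; first by exists id; split=> x; rewrite inE.
  have /card_gt0P[y0] : 0 < #|nbhd R [set x0]|.
    by have := hall [set x0]; rewrite sub1set x0L cards1; apply.
  rewrite inE => /andP[y0R /existsP[_ /andP[/set1P -> rxy0]]].
  have [f2 f2S] : exists f, saturating (L :\ x0) (R :\ y0) f.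
    apply: IH; first by have := cardsD1 x0 L; rewrite x0L; lia.
    apply: hall_condition_surplus => // S sSL nS SL.
    by have := noncrit S; rewrite sSL nS SL ltnNge.
  have f1S : saturating [set x0] [set y0] (fun=> y0).
    by split=> [x /set1P -> | x y /set1P -> /set1P ->]; rewrite ?inE ?eqxx.
  have sx0L : [set x0] \subset L by rewrite sub1set.
  exists (fun x => if x \in [set x0] then y0 else f2 x).
  by rewrite -(setD1K y0R); apply: saturating_glue (disjoint_setD _ _) f1S f2S.
Qed.

End Hall.

Section Multigraph.
Variables (V E : finType) (src tgt : E -> V).

Lemma deg_setU (F G : {set E}) v :
  (forall e, e \in F -> e \in G -> ~~ inc src tgt e v) ->
  deg src tgt (F :|: G) v = deg src tgt F v + deg src tgt G v.
Proof.
move=> dFG; rewrite /deg -cardsUI.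
have -> : [set e in F | inc src tgt e v] :&: [set e in G | inc src tgt e v] = set0.
  apply/setP => e; rewrite !inE; apply/negP => /andP[/andP[eF ev] /andP[eG _]].
  by move: ev; rewrite (negbTE (dFG e eF eG)).
by rewrite cards0 addn0; apply: eq_card => e; rewrite !inE andb_orl.
Qed.

Lemma deg_set1 g v : deg src tgt [set g] v = inc src tgt g v.
Proof.
rewrite /deg; case: (boolP (inc src tgt g v)) => gv.
  by apply/eqP/cards1P; exists g; apply/setP => e; rewrite !inE andb_idr // => /eqP ->.
apply/eqP; rewrite /= cards_eq0; apply/eqP/setP => e; rewrite !inE.
apply/negP => /andP[/eqP -> ]; exact/negP.
Qed.

Lemma deg0_notinc (F : {set E}) v e : deg src tgt F v = 0 -> e \in F -> ~~ inc src tgt e v.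
Proof.
rewrite /deg => /eqP; rewrite cards_eq0 => /eqP F0 eF; apply/negP => ev.
by have := in_set0 e; rewrite -F0 inE eF ev.
Qed.

Lemma deg_full (F : {set E}) v : [set e | inc src tgt e v] \subset F ->
  deg src tgt F v = deg src tgt setT v.
Proof.
move=> sF; apply: eq_card => e; rewrite !inE andbC andb_idr //.
by move=> ev; apply: (subsetP sF); rewrite inE.
Qed.

Lemma cut_neq0 (X : {set V}) u v : connected src tgt -> u \in X -> v \notin X ->
  cut src tgt X != set0.
Proof.
move=> conn uX vX; apply/negP => /eqP cut0.
have closedX : closed (adj src tgt) (mem X).
  move=> x y /existsP[e je]; have := in_set0 e; rewrite -cut0 inE => /negbFE/eqP.
  by case/orP: je => /andP[/eqP -> /eqP ->].
by move: vX; rewrite -(closed_connect closedX (conn u v)) uX.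
Qed.

Lemma joinsC e u v : joins src tgt e u v = joins src tgt e v u.
Proof. by rewrite /joins orbC. Qed.

Lemma sum_deg_const (F : {set E}) (Y : {set V}) c :
  {in Y, forall v, deg src tgt F v = c} -> \sum_(v in Y) deg src tgt F v = c * #|Y|.
Proof. by move=> degc; rewrite (eq_bigr (fun=> c)) // sum_nat_const mulnC. Qed.

Lemma cutC (X : {set V}) : cut src tgt (~: X) = cut src tgt X.
Proof. by apply/setP => e; rewrite !inE; case: (src e \in X); case: (tgt e \in X). Qed.

Definition two_cut_edge a b := exists e, joins src tgt e a b /\
  (forall e', joins src tgt e' a b -> e' = e) /\
  exists X : {set V}, #|cut src tgt X| = 2 /\ e \in cut src tgt X.

Definition edge_mult u v := #|[set e | joins src tgt e u v]|.

Definition nbrs u := [set v | adj src tgt u v].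

Definition star u := [set e | inc src tgt e u].

Lemma adj_mult u v : adj src tgt u v = (0 < edge_mult u v).
Proof. by apply/existsP/card_gt0P => -[e]; exists e; rewrite inE in p *. Qed.

Lemma adjC u v : adj src tgt u v = adj src tgt v u.
Proof. by apply/existsP/existsP => -[e]; exists e; rewrite joinsC. Qed.

Lemma edge_multC u v : edge_mult u v = edge_mult v u.
Proof. by apply: eq_card => e; rewrite !inE joinsC. Qed.

Lemma edge_mult_simple u v : edge_mult u v <= 1 -> edge_mult u v = adj src tgt u v.
Proof. by rewrite adj_mult; case: (edge_mult u v) => [|[]]. Qed.

Lemma deg_star u v : u != v -> deg src tgt (star u) v = edge_mult u v.
Proof.
move=> uv; apply: eq_card => e; rewrite !inE /inc /joins.
case: (src e =P u) => [->|_] /=; first by rewrite (negbTE uv) andFb orbF.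
by case: (tgt e =P u) => [->|_] /=; rewrite ?(negbTE uv) ?orbF ?andbT ?andbF.
Qed.

Lemma deg_sum_mult u : deg src tgt setT u = \sum_v edge_mult u v.
Proof.
pose other e := if src e == u then tgt e else src e.
rewrite /deg -sum1_card (partition_big other predT) //=; apply: eq_bigr => v _.
rewrite sum1dep_card; apply: eq_card => e; rewrite !inE /other /inc /joins.
case: (src e =P u) => [->|_] /=; last by rewrite andbC.
by case: (tgt e =P v) => //= tv; case: (u =P v) => //= uv; case: eqP => // tu; case: tv; rewrite tu.
Qed.

(* [(edge_mult u y).-1] counts the edges from [u] to [y] beyond the first one. *)
Lemma deg_nbrs_mult u w : deg src tgt setT u =
  edge_mult u w + #|nbrs u :\ w| + \sum_(y | y != w) (edge_mult u y).-1.
Proof.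
rewrite deg_sum_mult (bigD1 w) //= -addnA; congr (_ + _).
have -> : #|nbrs u :\ w| = \sum_(y | y != w) (0 < edge_mult u y).
  transitivity (\sum_(y | (y != w) && (0 < edge_mult u y)) 1).
    by rewrite sum1dep_card; apply: eq_card => y; rewrite !inE adj_mult.
  by rewrite big_mkcondr; apply: eq_bigr => y _; case: ifP.
by rewrite -big_split; apply: eq_bigr => y _; case: (edge_mult u y).
Qed.

Lemma deg_simple_nbrs u w : (forall y, y != w -> edge_mult u y <= 1) ->
  deg src tgt setT u = edge_mult u w + #|nbrs u :\ w|.
Proof.
move=> simple; rewrite (deg_nbrs_mult u w) big1 ?addn0 // => y /simple.
by case: (edge_mult u y) => [|[]].
Qed.

Lemma two_cut_edgeC a b : two_cut_edge a b -> two_cut_edge b a.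
Proof.
case=> e [je [uniq cutX]]; exists e; rewrite joinsC; split=> //; split=> // e'.
by rewrite joinsC; apply: uniq.
Qed.

End Multigraph.

Section Bipartite.
Variables (V E : finType) (src tgt : E -> V) (A : {set V}).
Hypothesis bip : bipartite_on src tgt A.

Definition endA e := if src e \in A then src e else tgt e.
Definition endB e := if src e \in A then tgt e else src e.

Lemma endA_in e : endA e \in A.
Proof. by rewrite /endA; have := bip e; case: ifP => // _; rewrite negbK. Qed.

Lemma endB_notin e : endB e \notin A.
Proof. by rewrite /endB; have := bip e; case: ifP => //; rewrite eq_sym => ->. Qed.

Lemma inc_ends e v : inc src tgt e v = (endA e == v) || (endB e == v).
Proof. by rewrite /inc /endA /endB; case: ifP; rewrite // orbC. Qed.

Lemma neq_AB x y : x \in A -> y \notin A -> (x == y) = false.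
Proof. by move=> xA; apply: contraNF => /eqP <-. Qed.

Lemma incA e v : v \in A -> inc src tgt e v = (endA e == v).
Proof. by move=> vA; rewrite inc_ends [endB e == v]eq_sym (neq_AB vA (endB_notin e)) orbF. Qed.

Lemma incB e v : v \notin A -> inc src tgt e v = (endB e == v).
Proof. by move=> vB; rewrite inc_ends (neq_AB (endA_in e) vB). Qed.

Lemma joins_ends e x y : x \in A -> y \notin A ->
  joins src tgt e x y = (endA e == x) && (endB e == y).
Proof.
move=> xA yB; rewrite /joins /endA /endB.
case: ifP => sA; first by rewrite (neq_AB sA yB) andFb orbF.
have -> : (src e == x) = false by apply/eqP => sx; rewrite sx xA in sA.
by rewrite /= andbC.
Qed.

Lemma in_cut_ends (X : {set V}) e :
  (e \in cut src tgt X) = ((endA e \in X) != (endB e \in X)).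
Proof. by rewrite inE /endA /endB; case: ifP => // _; rewrite eq_sym. Qed.

Lemma degA (F : {set E}) v : v \in A -> deg src tgt F v = #|[set e in F | endA e == v]|.
Proof. by move=> vA; apply: eq_card => e; rewrite !inE incA. Qed.

Lemma degB (F : {set E}) v : v \notin A -> deg src tgt F v = #|[set e in F | endB e == v]|.
Proof. by move=> vB; apply: eq_card => e; rewrite !inE incB. Qed.

Definition crossA (F : {set E}) (X : {set V}) :=
  [set e in F | (endA e \in X) && (endB e \notin X)].
Definition crossB (F : {set E}) (X : {set V}) :=
  [set e in F | (endB e \in X) && (endA e \notin X)].

Lemma card_cutI (F : {set E}) (X : {set V}) :
  #|F :&: cut src tgt X| = #|crossA F X| + #|crossB F X|.
Proof.
rewrite -(cardsID [set e | endA e \in X] (F :&: cut src tgt X)).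
congr (_ + _); apply: eq_card => e; rewrite ?in_setD !in_setI in_cut_ends !inE;
  by case: (e \in F); case: (endA e \in X); case: (endB e \in X).
Qed.

Lemma crossAS (F G : {set E}) (X : {set V}) : F \subset G -> crossA F X \subset crossA G X.
Proof. by move=> sFG; apply/subsetP => e; rewrite !inE => /andP[/(subsetP sFG) -> ->]. Qed.

Lemma sum_degA (F : {set E}) (X : {set V}) :
  \sum_(v in X :&: A) deg src tgt F v = #|[set e in F | endA e \in X]|.
Proof.
rewrite (eq_card (B := [set e in F | endA e \in X :&: A])) => [|e]; last first.
  by rewrite !inE endA_in andbT.
by rewrite card_sum_fibres; apply: eq_bigr => v; rewrite inE => /andP[_ /degA].
Qed.

Lemma sum_degB (F : {set E}) (X : {set V}) :
  \sum_(v in X :&: ~: A) deg src tgt F v = #|[set e in F | endB e \in X]|.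
Proof.
rewrite (eq_card (B := [set e in F | endB e \in X :&: ~: A])) => [|e]; last first.
  by rewrite !inE endB_notin andbT.
by rewrite card_sum_fibres; apply: eq_bigr => v; rewrite !inE => /andP[_ /degB].
Qed.

Lemma degree_balance (F : {set E}) (X : {set V}) :
  \sum_(v in X :&: A) deg src tgt F v + #|crossB F X| =
  \sum_(v in X :&: ~: A) deg src tgt F v + #|crossA F X|.
Proof.
rewrite sum_degA sum_degB -(cardsID [set e | endB e \in X] [set e in F | endA e \in X]).
rewrite -(cardsID [set e | endA e \in X] [set e in F | endB e \in X]) -!addnA.
congr (_ + _); last rewrite [RHS]addnC; [|congr (_ + _)]; apply: eq_card => e;
  by rewrite !inE; case: (e \in F); case: (endA e \in X); case: (endB e \in X).
Qed.

Lemma regular_balance (F : {set E}) (X : {set V}) c : (forall v, deg src tgt F v = c) ->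
  c * #|X :&: A| + #|crossB F X| = c * #|X :&: ~: A| + #|crossA F X|.
Proof. by move=> reg; have := degree_balance F X; rewrite !(sum_deg_const (c := c)). Qed.

Lemma lambda_balance a b (F : {set E}) (X : {set V}) : a \in A -> b \notin A ->
  ab_matching src tgt a b F -> a \in X -> b \notin X ->
  #|X :&: A| + 2 + #|crossB F X| = #|X :&: ~: A| + #|crossA F X|.
Proof.
move=> aA bB [Fa [_ Fv]] aX bX.
have aXA : a \in X :&: A by rewrite inE aX.
have := degree_balance F X; rewrite (big_setD1 _ aXA) Fa !(sum_deg_const (c := 1)) /=.
- by rewrite (cardsD1 a (X :&: A)) aXA; lia.
- move=> v; rewrite !inE => /andP[va /andP[_ vA]]; apply: Fv => //.
  by apply: (contraTneq _ vA) => ->.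
- move=> v; rewrite !inE => /andP[vX vB]; apply: Fv.
    by apply: (contraNneq _ vB) => ->.
  by apply: (contraNneq _ bX) => <-.
Qed.

Lemma adj_ends e : adj src tgt (endA e) (endB e).
Proof. by apply/existsP; exists e; rewrite joins_ends ?eqxx ?endA_in ?endB_notin. Qed.

Lemma adj_sides u v : adj src tgt u v -> (u \in A) != (v \in A).
Proof. by case/existsP=> e /orP[] /andP[/eqP <- /eqP <-]; rewrite // eq_sym. Qed.

Lemma adj_notin u v : u \in A -> adj src tgt u v -> v \notin A.
Proof. by move=> uA /adj_sides; rewrite uA; case: (v \in A). Qed.

Lemma adj_in u v : u \notin A -> adj src tgt u v -> v \in A.
Proof. by move=> uB /adj_sides; rewrite (negbTE uB); case: (v \in A). Qed.

(* Condition (ii), with [a \in X^-] and [b \in (~: X)^-] spelled out as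
   cardinality comparisons. *)
Definition tight_separation a b := (forall e, ~~ joins src tgt e a b) /\
  exists X : {set V}, tight src tgt (cut src tgt X) /\ a \in X /\ b \notin X /\
    #|X :&: A| < #|X :&: ~: A| /\ #|~: X :&: ~: A| < #|~: X :&: A|.

Section Cubic.
Hypothesis cub : cubic src tgt.

Lemma card_classes : #|A| = #|~: A|.
Proof.
have := regular_balance setT cub; rewrite !setTI.
have -> : crossA setT setT = set0 by apply/setP => e; rewrite !inE andbF.
have -> : crossB setT setT = set0 by apply/setP => e; rewrite !inE andbF.
by rewrite cards0; lia.
Qed.

Lemma matching_of_saturating (L R : {set V}) f :
  L \subset A -> R \subset ~: A -> #|R| <= #|L| -> saturating (adj src tgt) L R f ->
  exists M : {set E}, forall v, deg src tgt M v = (v \in L :|: R).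
Proof.
move=> sLA sRB leRL [fLR finj].
have imR : f @: L = R.
  apply/eqP; rewrite eqEcard card_in_imset // leRL andbT.
  by apply/subsetP => _ /imsetP[x xL ->]; case/andP: (fLR x xL).
pose pick_edge x := [pick e | joins src tgt e x (f x)].
have picked x : x \in L ->
    exists2 e, pick_edge x = Some e & (endA e == x) && (endB e == f x).
  move=> xL; have /andP[fxR /existsP[e0 je0]] := fLR x xL.
  rewrite /pick_edge; case: pickP => [e je | /(_ e0)]; last by rewrite je0.
  exists e => //; rewrite -joins_ends //; first exact: (subsetP sLA).
  by have := subsetP sRB _ fxR; rewrite inE.
exists [set e | (endA e \in L) && (pick_edge (endA e) == Some e)] => v.
case: (boolP (v \in A)) => vA.
- have vR : v \notin R by apply: contraL vA => /(subsetP sRB); rewrite inE.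
  rewrite degA // in_setU (negbTE vR) orbF.
  case: (boolP (v \in L)) => vL.
  + have [e pe /andP[/eqP ea _]] := picked v vL.
    apply/eqP/cards1P; exists e; apply/setP => e'; rewrite !inE.
    apply/idP/eqP => [/andP[/andP[_ /eqP pe'] /eqP ea'] | ->]; last by rewrite ea vL pe !eqxx.
    by move: pe'; rewrite ea' pe => -[].
  + apply/eqP; rewrite /= cards_eq0; apply/eqP/setP => e; rewrite !inE.
    by apply/negP => /andP[/andP[eL _] /eqP ea]; rewrite -ea eL in vL.
- have vL : v \notin L by apply: contra vA => /(subsetP sLA).
  rewrite degB // in_setU (negbTE vL) /=.
  case: (boolP (v \in R)) => vR.
  + move: vR; rewrite -imR => /imsetP[x xL ->].
    have [e pe /andP[/eqP ea /eqP eb]] := picked x xL.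
    apply/eqP/cards1P; exists e; apply/setP => e'; rewrite !inE.
    apply/idP/eqP => [/andP[/andP[eL' /eqP pe'] /eqP eb'] | ->]; last by rewrite ea xL pe eb !eqxx.
    have [e'' pe'' /andP[_ /eqP eb'']] := picked _ eL'.
    rewrite pe' in pe''; case: pe'' => ee''; subst e''.
    have ex : endA e' = x by apply: finj => //; rewrite -eb'' eb'.
    by move: pe'; rewrite ex pe => -[].
  + apply/eqP; rewrite /= cards_eq0; apply/eqP/setP => e; rewrite !inE.
    apply/negP => /andP[/andP[eL /eqP pe] /eqP eb]; case/negP: vR.
    have [e' pe' /andP[_ /eqP eb']] := picked _ eL.
    rewrite pe in pe'; case: pe' => ee'; subst e'.
    by rewrite -eb eb'; case/andP: (fLR _ eL).
Qed.

Lemma hall_condition_avoiding g :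
  hall_condition (adj src tgt) (A :\ endA g) (~: A :\ endB g).
Proof.
move=> S sS; set N := nbhd _ _ S.
have sSA : S \subset A := subset_trans sS (subsetDl _ _).
have sNB : N \subset ~: A.
  by apply/subsetP => y; rewrite inE => /andP[/(subsetP (subsetDl _ _))].
(* an edge leaving [S] ends in [N] or is one of the two other edges at [endB g] *)
have sub : [set e in setT | endA e \in S] \subset
    [set e in setT | endB e \in N] :|: ([set e in setT | endB e == endB g] :\ g).
  apply/subsetP => e; rewrite !inE /= => eS.
  case: (endB e =P endB g) => [eb | _]; rewrite /= ?andbT.
    by apply/eqP => eg; move/(subsetP sS): eS; rewrite eg !inE eqxx.
  rewrite endB_notin andbF orbF /=; apply/existsP; exists (endA e); rewrite eS /=.
  by apply/existsP; exists e; rewrite joins_ends ?eqxx ?endA_in ?endB_notin.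
have := subset_leq_card sub; rewrite cardsU.
rewrite -!(sum_degA, sum_degB) !(sum_deg_const (c := 3)) //.
have := cardsD1 g [set e in setT | endB e == endB g]; rewrite !inE eqxx /= -degB ?endB_notin //.
by rewrite cub (setIidPl sSA) (setIidPl sNB); lia.
Qed.

Lemma perfect_matching_through g : exists2 M, perfect_matching src tgt M & g \in M.
Proof.
set L := A :\ endA g; set R := ~: A :\ endB g.
have [f fsat] := hall_saturating (hall_condition_avoiding (g := g)).
have leRL : #|R| <= #|L|.
  have := cardsD1 (endA g) A; have := cardsD1 (endB g) (~: A).
  by rewrite endA_in inE endB_notin -card_classes /L /R /=; lia.
have [M degM] := matching_of_saturating (subsetDl _ _) (subsetDl _ _) leRL fsat.
have uncovered v : inc src tgt g v = (v \notin L :|: R).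
  rewrite inc_ends !inE; case: (boolP (v \in A)) => vA /=.
    by rewrite [endB g == v]eq_sym (neq_AB vA (endB_notin g)) andbT andbF !orbF negbK eq_sym.
  by rewrite (neq_AB (endA_in g) vA) andbT andbF /= negbK eq_sym.
exists (g |: M); last exact: setU11.
move=> v; rewrite deg_setU ?deg_set1 ?degM ?uncovered; first by case: (v \in L :|: R).
move=> e /set1P -> gM; have gA : endA g \notin L :|: R by rewrite -uncovered inc_ends eqxx.
have dg : deg src tgt M (endA g) = 0 by rewrite degM -/L -/R (negbTE gA).
by have := deg0_notinc dg gM; rewrite inc_ends eqxx.
Qed.

Lemma tight_cut_matching (X : {set V}) M :
  tight src tgt (cut src tgt X) -> #|X :&: A| < #|X :&: ~: A| ->
  perfect_matching src tgt M -> #|crossA M X| = 0 /\ #|X :&: ~: A| = #|X :&: A| + 1.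
Proof.
move=> tX lt pmM; have := tX M pmM; rewrite setIC card_cutI.
by have := regular_balance X pmM; rewrite !mul1n; lia.
Qed.

Lemma tight_cut_card (X : {set V}) :
  tight src tgt (cut src tgt X) -> #|X :&: A| < #|X :&: ~: A| ->
  #|X :&: ~: A| = #|X :&: A| + 1.
Proof.
move=> tX lt; have /card_gt0P[v _] : 0 < #|X :&: ~: A| by lia.
have /card_gt0P[g _] : 0 < deg src tgt setT v by rewrite cub.
by have [M pmM _] := perfect_matching_through g; case: (tight_cut_matching tX lt pmM).
Qed.

Lemma tight_cut_of_deficit (X : {set V}) : crossA setT X = set0 ->
  #|X :&: ~: A| = #|X :&: A| + 1 -> tight src tgt (cut src tgt X).
Proof.
move=> noA cardX M pmM; rewrite setIC card_cutI.
have := subset_leq_card (crossAS X (subsetT M)); rewrite noA cards0.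
by have := regular_balance X pmM; rewrite !mul1n; lia.
Qed.

Section LambdaMatchability.
Variables (a b : V).
Hypotheses (aA : a \in A) (bB : b \notin A).

Lemma tight_cut_not_lambda (X : {set V}) :
  tight src tgt (cut src tgt X) -> a \in X -> b \notin X -> #|X :&: A| < #|X :&: ~: A| ->
  ~ lambda_matchable src tgt a b.
Proof.
move=> tX aX bX lt [F abF].
have := lambda_balance aA bB abF aX bX; have := tight_cut_card tX lt.
move=> cardX balF; have /card_gt0P[g gF] : 0 < #|crossA F X| by lia.
have [M pmM gM] := perfect_matching_through g.
have [+ _] := tight_cut_matching tX lt pmM; apply/eqP; rewrite -lt0n.
by apply/card_gt0P; exists g; move: gF; rewrite !inE gM => /andP[_ ->].
Qed.

(* The balance of [H] forces [#|X :&: A| = #|X :&: ~: A|], so [F] would need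
   two edges leaving [X] from its [A]-side, where [e] is the only one. *)
Lemma two_cut_not_lambda e (X : {set V}) : joins src tgt e a b ->
  #|cut src tgt X| = 2 -> e \in cut src tgt X -> ~ lambda_matchable src tgt a b.
Proof.
rewrite joins_ends // => /andP[/eqP ea /eqP eb] cX eX.
wlog aX : X cX eX / a \in X.
  move=> gen; case: (boolP (a \in X)) => aX; first exact: gen aX.
  by move: (gen (~: X)); rewrite cutC in_setC; apply.
move=> [F abF].
have bX : b \notin X by move: eX; rewrite in_cut_ends ea eb aX; case: (b \in X).
have eA : 0 < #|crossA setT X| by apply/card_gt0P; exists e; rewrite !inE ea eb aX bX.
have := card_cutI setT X; rewrite setTI cX.
have := subset_leq_card (crossAS X (subsetT F)).
have := regular_balance X cub; have := lambda_balance aA bB abF aX bX.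
lia.
Qed.

Lemma tight_separation_Xminus : tight_separation a b ->
  (forall e, ~~ joins src tgt e a b) /\ exists X : {set V}, odd #|X| /\
    tight src tgt (cut src tgt X) /\ a \in Xminus A X /\ b \in Xminus A (~: X).
Proof.
case=> noab [X [tX [aX [bX [lt1 lt2]]]]]; split=> //; exists X.
rewrite mem_Xminus_in // mem_Xminus_notin // inE aX bX (ltnW lt2); split=> //.
by rewrite -(cardsIC A X) ![_ :&: X]setIC (tight_cut_card tX lt1) addnA addnn oddD odd_double.
Qed.

Hypothesis conn : connected src tgt.

(* Counting edges across [cut X] with the cubic balance leaves exactly three
   possibilities: no crossing edge (impossible, [H] is connected), a 2-cut
   through the unique [ab]-edge, or a tight cut with all edges entering [X]. *)
Lemma obstruction_of_separator (X : {set V}) : a \in X -> b \notin X ->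
  (forall e, endA e \in X -> endB e \notin X -> joins src tgt e a b) ->
  #|X :&: ~: A| + edge_mult src tgt a b <= #|X :&: A| + 1 ->
  two_cut_edge src tgt a b \/ tight_separation a b.
Proof.
move=> aX bX leaving small.
have crossAE : crossA setT X = [set e | joins src tgt e a b].
  apply/setP => e; rewrite !inE /= joins_ends //.
  apply/idP/idP => [/andP[eX eX'] | /andP[/eqP -> /eqP ->]]; last by rewrite aX bX.
  by rewrite -joins_ends //; apply: leaving.
have bal := regular_balance X cub; have cutX := card_cutI setT X.
rewrite setTI crossAE -/(edge_mult src tgt a b) in bal cutX.
have [k1 | k0] : edge_mult src tgt a b = 1 \/ edge_mult src tgt a b = 0 by lia.
- left; have /cards1P[e eE] : #|[set e | joins src tgt e a b]| == 1 by apply/eqP.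
  have je : joins src tgt e a b by have := set11 e; rewrite -eE inE.
  exists e; split=> //; split=> [e' je' | ]; first by apply/set1P; rewrite -eE inE.
  exists X; split; first lia.
  by move: je; rewrite joins_ends // in_cut_ends => /andP[/eqP -> /eqP ->]; rewrite aX bX.
- have cut0 := cut_neq0 conn aX bX; rewrite -card_gt0 in cut0.
  right; split=> [e | ].
    by apply/negP => je; move: k0; rewrite /edge_mult (cardsD1 e) inE je.
  have cardX : #|X :&: ~: A| = #|X :&: A| + 1 by lia.
  exists X; split.
    by apply: tight_cut_of_deficit cardX; apply/eqP; rewrite crossAE -cards_eq0; apply/eqP.
  do 3!split=> //; first lia.
  by have := cardsIC X A; have := cardsIC X (~: A); have := card_classes; lia.
Qed.

Lemma obstruction_of_parallel_edges c : c != b -> 1 < edge_mult src tgt a c ->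
  two_cut_edge src tgt a b \/ tight_separation a b.
Proof.
move=> cb multc; set N := nbrs src tgt a :\ b.
apply: (obstruction_of_separator (X := a |: N)).
- exact: setU11.
- by rewrite !inE eqxx /= orbF; apply: contraNneq bB => ->.
- move=> e; rewrite !inE => /orP[/eqP ea | /andP[_ /(adj_notin aA)]]; last by rewrite endA_in.
  rewrite negb_or negb_and negbK => /andP[_ /orP[/eqP eb | nadj]].
    by rewrite joins_ends // ea eb !eqxx.
  by case/negP: nadj; apply/existsP; exists e; rewrite joins_ends ?ea ?eqxx ?endB_notin.
- have sXB : (a |: N) :&: ~: A \subset N.
    by apply/subsetP => v; rewrite !inE => /andP[/orP[/eqP -> | ->] //]; rewrite aA.
  have aXA : 0 < #|(a |: N) :&: A| by apply/card_gt0P; exists a; rewrite !inE eqxx aA.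
  have := deg_nbrs_mult src tgt a b; rewrite cub (bigD1 c) //= -/N.
  by have := subset_leq_card sXB; lia.
Qed.

(* Without parallel edges at a or b, an (a,b)-matching consists of the edges at
   a and b together with a perfect matching between [restA] and [restB]. *)
Section SimpleEnds.
Hypotheses (simple_a : forall y, y != b -> edge_mult src tgt a y <= 1)
           (simple_b : forall y, y != a -> edge_mult src tgt b y <= 1).

Let restA := A :\: (a |: nbrs src tgt b).
Let restB := ~: A :\: (b |: nbrs src tgt a).

Lemma card_restB_le_restA : #|restB| <= #|restA|.
Proof.
have da := deg_simple_nbrs simple_a; have db := deg_simple_nbrs simple_b.
rewrite cub in da; rewrite cub edge_multC in db.
have sLA : a |: nbrs src tgt b \subset A.
  by apply/subsetP => v; rewrite !inE => /orP[/eqP -> // | /(adj_in bB)].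
have sRB : b |: nbrs src tgt a \subset ~: A.
  by apply/subsetP => v; rewrite !inE => /orP[/eqP -> // | /(adj_notin aA)].
rewrite /restA /restB !cardsD (setIidPr sLA) (setIidPr sRB) !cardsU1 -card_classes.
rewrite (cardsD1 a (nbrs src tgt b)) (cardsD1 b (nbrs src tgt a)).
suff -> : #|nbrs src tgt a :\ b| = #|nbrs src tgt b :\ a| by rewrite !addnA !addn_negb.
by apply/eqP; rewrite -(eqn_add2l (edge_mult src tgt a b)) -da -db.
Qed.

Lemma lambda_degree v : v != a -> v != b ->
  edge_mult src tgt a v + edge_mult src tgt b v + (v \in restA :|: restB) = 1.
Proof.
move=> va vb; rewrite (edge_mult_simple (simple_a vb)) (edge_mult_simple (simple_b va)).
rewrite /restA /restB !inE (negbTE va) (negbTE vb) /=.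
case: (boolP (v \in A)) => vA /=.
  have -> : adj src tgt a v = false by apply: contraTF vA => /(adj_notin aA).
  by case: (adj src tgt b v).
have -> : adj src tgt b v = false by apply: contraNF vA => /(adj_in bB).
by case: (adj src tgt a v).
Qed.

Lemma lambda_matchable_of_hall : hall_condition (adj src tgt) restA restB ->
  lambda_matchable src tgt a b.
Proof.
move=> hall; have [f fsat] := hall_saturating hall.
have [M degM] := matching_of_saturating (subsetDl _ _) (subsetDl _ _) card_restB_le_restA fsat.
have Mab e : e \in M -> ~~ inc src tgt e a && ~~ inc src tgt e b.
  by move=> eM; apply/andP; split; apply: (deg0_notinc _ eM);
    rewrite degM /restA /restB !inE eqxx /= ?aA ?(negbTE bB) ?andbF.
exists (star src tgt a :|: star src tgt b :|: M); split; [|split].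
- by rewrite deg_full ?cub //; apply/subsetP => e; rewrite !inE => ->.
- by rewrite deg_full ?cub //; apply/subsetP => e; rewrite !inE => ->; rewrite orbT.
move=> v va vb; have av : a != v by rewrite eq_sym. have bv : b != v by rewrite eq_sym.
rewrite -(lambda_degree va vb) -degM -(deg_star src tgt av) -(deg_star src tgt bv) !deg_setU //.
- move=> e; rewrite !inE (incA _ aA) (incB _ bB) => /eqP ea /eqP eb.
  by rewrite inc_ends ea eb ![_ == v]eq_sym (negbTE va) (negbTE vb).
- by move=> e; rewrite !inE => /orP[] abe /Mab; rewrite abe ?andbF.
Qed.

Lemma obstruction_of_hall_violation (S : {set V}) : S \subset restA ->
  #|nbhd (adj src tgt) restB S| < #|S| -> two_cut_edge src tgt a b \/ tight_separation a b.
Proof.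
move=> sSL deficient; set T := nbhd (adj src tgt) restB S; set N := nbrs src tgt a :\ b.
have SA x : x \in S -> [&& x \in A, x != a & ~~ adj src tgt b x].
  by move/(subsetP sSL); rewrite /restA !inE negb_or andbC.
have TB y : y \in T -> y \notin A by rewrite /T /restB !inE => /andP[/andP[_ ->]].
have NB y : y \in N -> y \notin A by rewrite !inE => /andP[_ /(adj_notin aA)].
have aS : a \notin S by apply/negP => /SA; rewrite eqxx andbF.
apply: (obstruction_of_separator (X := a |: S :|: (T :|: N))).
- by rewrite !inE eqxx.
- rewrite !in_setU !in_set1 negb_or; apply/andP; split.
    by apply/norP; split; [apply: contraNneq bB => -> | apply: contraNN bB => /SA/andP[]].
  by apply/norP; split; rewrite !inE eqxx.
- move=> e; rewrite !in_setU in_set1 => /orP[/orP[/eqP ea | eS] | /orP[/TB | /NB]];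
    rewrite ?endA_in // !negb_or => /andP[/andP[_ eS'] /andP[eT eN]].
  + move: eN; rewrite !inE -ea adj_ends andbT negbK => /eqP eb.
    by rewrite joins_ends ?endA_in // eb !eqxx.
  + have eb : endB e != b.
      by apply: (contraTneq _ (SA _ eS)) => eb; rewrite -eb adjC adj_ends !andbF.
    move: eN; rewrite !inE eb /= => naeB; case/negP: eT.
    rewrite /T /restB !inE endB_notin (negbTE eb) (negbTE naeB) /=; apply/existsP; exists (endA e).
    by rewrite eS adj_ends.
- have sXB : (a |: S :|: (T :|: N)) :&: ~: A \subset T :|: N.
    apply/subsetP => v; rewrite !inE => /andP[/orP[/orP[/eqP -> | /SA/and3P[-> _ _]] | ->] //].
    by rewrite aA.
  have sXA : a |: S \subset (a |: S :|: (T :|: N)) :&: A.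
    apply/subsetP => v; rewrite !inE => /orP[/eqP -> | vS]; first by rewrite eqxx aA.
    by have /and3P[-> _ _] := SA v vS; rewrite vS !orbT.
  have := deg_simple_nbrs simple_a; rewrite cub -/N.
  have := subset_leq_card sXB; have := subset_leq_card sXA.
  by move: deficient; rewrite cardsU1 aS cardsU -/T /=; lia.
Qed.

Lemma obstruction_of_simple_ends : ~ lambda_matchable src tgt a b ->
  two_cut_edge src tgt a b \/ tight_separation a b.
Proof.
move=> nlm; case: (boolP [exists S : {set V},
    (S \subset restA) && (#|nbhd (adj src tgt) restB S| < #|S|)]).
  by case/existsP => S /andP[]; exact: obstruction_of_hall_violation.
rewrite negb_exists => /forallP hall; case: nlm; apply: lambda_matchable_of_hall => S sSL.
by have := hall S; rewrite sSL /= -leqNgt.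
Qed.

End SimpleEnds.

End LambdaMatchability.

End Cubic.
End Bipartite.

Lemma bipartite_onC (V E : finType) (src tgt : E -> V) (A : {set V}) :
  bipartite_on src tgt A -> bipartite_on src tgt (~: A).
Proof. by move=> bip e; rewrite !inE; have := bip e; case: (src e \in A); case: (tgt e \in A). Qed.

Lemma tight_separationC (V E : finType) (src tgt : E -> V) (A : {set V}) a b :
  tight_separation src tgt (~: A) b a -> tight_separation src tgt A a b.
Proof.
case=> noab [X [tX [bX [aX [lt1 lt2]]]]]; split=> [e | ]; first by rewrite joinsC.
exists (~: X); rewrite cutC !inE negbK setCK in lt1 lt2 *; rewrite setCK.
by do !split.
Qed.

Lemma obstruction_of_not_lambda_matchable (V E : finType) (src tgt : E -> V) (A : {set V}) a b :
  bipartite_on src tgt A -> cubic src tgt -> connected src tgt -> a \in A -> b \notin A ->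
  ~ lambda_matchable src tgt a b ->
  two_cut_edge src tgt a b \/ tight_separation src tgt A a b.
Proof.
move=> bip cub conn aA bB nlm.
case: (pickP (fun c => (c != b) && (1 < edge_mult src tgt a c))) => [c /andP[cb mc] | simple_a].
  exact: obstruction_of_parallel_edges cb mc.
case: (pickP (fun d => (d != a) && (1 < edge_mult src tgt b d))) => [d /andP[da md] | simple_b].
  have bB' : b \in ~: A by rewrite inE.
  have aA' : a \notin ~: A by rewrite inE aA.
  case: (obstruction_of_parallel_edges (bipartite_onC bip) cub bB' aA' conn da md).
    by left; apply: two_cut_edgeC.
  by right; apply: tight_separationC.
apply: obstruction_of_simple_ends => // y ny.
  by have := simple_a y; rewrite ny /= => /negbT; rewrite -leqNgt.
by have := simple_b y; rewrite ny /= => /negbT; rewrite -leqNgt.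
Qed.

Theorem lemma2p4 (V E : finType) (src tgt : E -> V) (A : {set V}) (a b : V) :
  loopless src tgt ->
  bipartite_on src tgt A ->
  connected src tgt ->
  cubic src tgt ->
  a \in A -> b \in ~: A ->
  let condi :=
    exists e, joins src tgt e a b /\
      (forall e', joins src tgt e' a b -> e' = e) /\
      exists X : {set V}, #|cut src tgt X| = 2 /\ e \in cut src tgt X in
  let condii :=
    (forall e, ~~ joins src tgt e a b) /\
    exists X : {set V}, odd #|X| /\ tight src tgt (cut src tgt X) /\
      a \in Xminus A X /\ b \in Xminus A (~: X) in
  ~ lambda_matchable src tgt a b <->
    ((condi /\ ~ condii) \/ (~ condi /\ condii)).
Proof.
(* A bipartite graph has no loops anyway. *)
move=> _ bip conn cub aA; rewrite inE => bB condi condii.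
have excl : condi -> ~ condii by case=> e [je _] [noab _]; move: (noab e); rewrite je.
suff [obs nlm] : ~ lambda_matchable src tgt a b <-> condi \/ condii.
  split=> [/obs [ci | cii] | [[ci _] | [_ cii]]].
  - by left; split=> // cii; exact: excl ci cii.
  - by right; split=> // ci; exact: excl ci cii.
  - by apply: nlm; left.
  - by apply: nlm; right.
split=> [/(obstruction_of_not_lambda_matchable bip cub conn aA bB) [ci | sep] | ].
- by left.
- by right; apply: tight_separation_Xminus.
case=> [[e [je [_ [X [cX eX]]]]] | [_ [X [_ [tX [aX bX]]]]]].
  exact: two_cut_not_lambda je cX eX.
rewrite mem_Xminus_in // in aX; rewrite mem_Xminus_notin // inE in bX.
case/andP: aX => aX lt; case/andP: bX => bX _.
exact: tight_cut_not_lambda tX aX bX lt.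
Qed.
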